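(* Let $p$ be an odd prime and $G$ the non-abelian group of order $p^3$ and exponent $p$. Let $W$ be a sequence over $G$ of length $p^3+3p-3$. Then: (i) $W$ has a subsequence of length $p^3$ with central product; (ii) if at least $p^3+p-1$ terms of $W$ (counted with multiplicity) lie in $Z(G)$, then $W$ has a product-one subsequence of length $p^3$; (iii) if at least $p^3+2p-2$ terms of $W$ (counted with multiplicity) lie in some maximal subgroup of $G$, then $W$ has a product-one subsequence of length $p^3$.
   Context: $G = \langle x, y : x^p = y^p = 1,\ [y,x] \text{ central}\rangle$ is the Heisenberg group of order $p^3$ and exponent $p$, with $Z(G)=[G,G]$ of order $p$. A sequence over $G$ is a finite unordered list (multiset) of elements of $G$; a subsequence is a sub-multiset. A sequence $g_1\cdot\dotsc\cdot g_\ell$ has central product if $g_1\cdots g_\ell\in Z(G)$ (independent of ordering). A non-empty sequence is product-one if some ordering of its terms has product $1$. *)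

From mathcomp Require Import all_boot all_fingroup all_solvable.
Set Implicit Arguments. Unset Strict Implicit. Unset Printing Implicit Defensive.
Local Open Scope group_scope.

(* Sequences over a group are represented as [seq gT] (order irrelevant).
   [msub S W]: S is a sub-multiset of W. *)
Definition msub (gT : eqType) (S W : seq gT) : Prop :=
  exists T : seq gT, subseq T W /\ perm_eq S T.

Definition seqprod (gT : finGroupType) (S : seq gT) : gT := \prod_(x <- S) x.

(* S has central product in G (order independent) *)
Definition has_central_product (gT : finGroupType) (G : {set gT}) (S : seq gT) : Prop :=
  seqprod S \in 'Z(G).

Definition product_one (gT : finGroupType) (S : seq gT) : Prop :=
  S <> [::] /\ exists T : seq gT, perm_eq T S /\ seqprod T = 1.

From Pilot Require Import Defs.
From HB Require Import structures.
From mathcomp Require Import all_boot all_algebra all_fingroup all_solvable.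
From mathcomp Require Import mxabelem zify.
Set Implicit Arguments. Unset Strict Implicit. Unset Printing Implicit Defensive.
Import GRing.Theory.

(* Let A be an elementary abelian p-group of rank n, identified with F_p^n.
   Sending each term x of a sequence over A to (x, 1) in F_p^n x Z_(p^e)
   turns product-one subsequences of length p^e into zero-sum subsequences:
   a nonempty zero-sum subsequence has length a positive multiple of p^e, so
   exactly p^e when the sequence is shorter than 2 p^e.  Olson's theorem,
   D(F_p^n x Z_(p^e)) = n(p-1) + p^e, provides one as soon as the length is
   at least that bound.  Olson's theorem is proved in the group algebra F[V]
   of characteristic p: the product of the (1 - [g_i]) is a product of more
   elements of the ideal generated by the nilpotent elements 1 - [e_j] than
   their nilpotency allows, hence 0, while its coefficient at 0 is 1 unless a
   nonempty subsequence sums to 0.  The three claims apply this with e = 3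
   to G/Z(G) (n = 2), Z(G) (n = 1) and a maximal subgroup M (n = 2), all
   elementary abelian. *)

Local Open Scope ring_scope.

Section GroupAlgebra.
Variables (F : comNzRingType) (V : finZmodType).

(* The group algebra F[V], with convolution product; [gdelta u] is [u]. *)
Definition galg := {ffun V -> F}.
HB.instance Definition _ := GRing.Zmodule.on galg.

Definition galg_mul (f g : galg) : galg := [ffun v => \sum_u f u * g (v - u)].
Definition galg_one : galg := [ffun v => (v == 0)%:R].

Lemma galg_mulC : commutative galg_mul.
Proof.
move=> f g; apply/ffunP=> v; rewrite !ffunE.
rewrite (reindex_inj (inv_inj (subKr v))) /=.
by apply: eq_bigr => u _; rewrite subKr mulrC.
Qed.

Lemma galg_mul1 : left_id galg_one galg_mul.
Proof.
move=> g; apply/ffunP=> v; rewrite ffunE (bigD1 0) //= big1 => [|u /negPf nu].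
  by rewrite ffunE eqxx mul1r subr0 addr0.
by rewrite ffunE nu mul0r.
Qed.

Lemma galg_mulDl : left_distributive galg_mul +%R.
Proof.
move=> f g h; apply/ffunP=> v; rewrite !ffunE -big_split /=.
by apply: eq_bigr => u _; rewrite ffunE mulrDl.
Qed.

Lemma galg_mulA : associative galg_mul.
Proof.
move=> f g h; apply/ffunP=> v; rewrite !ffunE.
transitivity (\sum_u \sum_w f u * (g w * h (v - u - w))).
  by apply: eq_bigr => u _; rewrite ffunE big_distrr.
transitivity (\sum_u \sum_w f u * g (w - u) * h (v - w)); last first.
  rewrite exchange_big /=; apply: eq_bigr => w _.
  by rewrite ffunE big_distrl.
apply: eq_bigr => u _; rewrite [RHS](reindex_inj (addrI u)) /=.
apply: eq_bigr => w _; rewrite mulrA [u + w]addrC addrK; congr (_ * h _).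
by rewrite opprD addrA addrAC.
Qed.

Lemma galg_one_neq0 : galg_one != 0.
Proof. by apply/eqP => /ffunP/(_ 0); rewrite !ffunE eqxx; apply/eqP/oner_neq0. Qed.

HB.instance Definition _ :=
  GRing.Zmodule_isComNzRing.Build galg galg_mulA galg_mulC galg_mul1 galg_mulDl
    galg_one_neq0.

Definition gdelta (u : V) : galg := [ffun v => (v == u)%:R].

Lemma gdelta0 : gdelta 0 = 1. Proof. by []. Qed.

Lemma gdeltaD u w : gdelta (u + w) = gdelta u * gdelta w.
Proof.
apply/ffunP=> v; rewrite [RHS]ffunE (bigD1 u) //= big1 => [|x /negPf nx].
  by rewrite !ffunE eqxx mul1r addr0 subr_eq addrC.
by rewrite ffunE nx mul0r.
Qed.

Lemma gdeltaMn u n : gdelta (u *+ n) = gdelta u ^+ n.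
Proof. by elim: n => [|n IH]; rewrite ?mulr0n // mulrS exprS gdeltaD IH. Qed.

Lemma galg_pchar p : p \in [pchar F] -> p \in [pchar galg].
Proof.
move=> pF; rewrite inE (pcharf_prime pF); apply/eqP/ffunP => v.
by rewrite ffunMnE -mulr_natr (pcharf0 pF) mulr0 ffunE.
Qed.

Lemma gdelta_frobenius p k u : p \in [pchar F] ->
  (1 - gdelta u) ^+ (p ^ k) = 1 - gdelta (u *+ p ^ k).
Proof.
move=> pF; have pnat_pk : [pchar galg].-nat (p ^ k)%N.
  by rewrite pnatX (pnatE _ (pcharf_prime pF)) galg_pchar.
by rewrite exprDn_pchar // expr1n exprNn_pchar // gdeltaMn.
Qed.

End GroupAlgebra.

Lemma pigeonhole_fiber (I J : finType) (f : I -> J) (n : J -> nat) :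
  (\sum_j (n j).-1 < #|I|)%N -> exists j, (n j <= #|[pred i | f i == j]|)%N.
Proof.
move=> ltI; apply/existsP; apply: contraLR ltI => /existsPn small.
rewrite -leqNgt -sum1_card (partition_big f predT) //= leq_sum // => j _.
by rewrite sum1_card -ltnS (leq_trans _ (leqSpred _)) // ltnNge small.
Qed.

Lemma prod_comb_nilpotent_eq0 (R : comNzRingType) (I J : finType)
    (u : J -> R) (n : J -> nat) (c : I -> J -> R) :
  (forall j, u j ^+ n j = 0) -> (\sum_j (n j).-1 < #|I|)%N ->
  \prod_i \sum_j u j * c i j = 0.
Proof.
move=> un0 ltI; rewrite bigA_distr_bigA big1 // => f _.
have [j le_nj] := pigeonhole_fiber f ltI.
rewrite big_split /= (partition_big f predT) //= (bigD1 j) //=.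
rewrite (eq_bigr (fun=> u j)) => [|i /eqP -> //].
by rewrite prodr_const -(subnKC le_nj) exprD un0 !mul0r.
Qed.

Section DeltaIdeal.
Variables (F : comNzRingType) (V : finZmodType) (J : finType) (e : J -> V).
Local Notation galg := (galg F V).
Local Notation gdelta := (gdelta F).

Definition in_delta_ideal (x : galg) :=
  exists d : J -> galg, x = \sum_j (1 - gdelta (e j)) * d j.

Lemma in_delta_ideal0 : in_delta_ideal 0.
Proof. by exists (fun=> 0); rewrite big1 // => j _; rewrite mulr0. Qed.

Lemma in_delta_idealD x y :
  in_delta_ideal x -> in_delta_ideal y -> in_delta_ideal (x + y).
Proof.
move=> [c ->] [d ->]; exists (fun j => c j + d j).
by rewrite -big_split; apply: eq_bigr => j _; rewrite mulrDr.
Qed.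

Lemma in_delta_idealMl x y : in_delta_ideal x -> in_delta_ideal (y * x).
Proof.
move=> [c ->]; exists (fun j => y * c j).
by rewrite big_distrr; apply: eq_bigr => j _; rewrite mulrCA.
Qed.

Lemma in_delta_ideal_gen j : in_delta_ideal (1 - gdelta (e j)).
Proof.
exists (fun i => (i == j)%:R); rewrite (bigD1 j) //= big1 => [|i /negPf ->].
  by rewrite eqxx mulr1 addr0.
by rewrite mulr0.
Qed.

Lemma in_delta_ideal_deltaD u w :
  in_delta_ideal (1 - gdelta u) -> in_delta_ideal (1 - gdelta w) ->
  in_delta_ideal (1 - gdelta (u + w)).
Proof.
move=> Iu Iw; have -> : 1 - gdelta (u + w) = (1 - gdelta u) + gdelta u * (1 - gdelta w).
  by rewrite gdeltaD mulrBr mulr1 addrA subrK.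
by apply: in_delta_idealD => //; apply: in_delta_idealMl.
Qed.

Lemma in_delta_ideal_comb (c : J -> nat) :
  in_delta_ideal (1 - gdelta (\sum_j e j *+ c j)).
Proof.
have I0 : in_delta_ideal (1 - gdelta 0) by rewrite gdelta0 subrr; apply: in_delta_ideal0.
apply: (big_ind (fun u => in_delta_ideal (1 - gdelta u))) => // [|j _].
  exact: in_delta_ideal_deltaD.
elim: (c j) => [|k IHk]; rewrite ?mulr0n // mulrS.
by apply: in_delta_ideal_deltaD => //; apply: in_delta_ideal_gen.
Qed.

End DeltaIdeal.

Theorem olson (F : comNzRingType) (V : finZmodType) (p : nat) (I J : finType)
    (e : J -> V) (t : J -> nat) (g : I -> V) :
  p \in [pchar F] -> (forall j, e j *+ p ^ t j = 0) ->
  (forall i, exists c : J -> nat, g i = \sum_j e j *+ c j) ->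
  (\sum_j (p ^ t j).-1 < #|I|)%N ->
  exists2 X : {set I}, X != set0 & \sum_(i in X) g i = 0.
Proof.
move=> pF ord_e comb_g ltI.
have [X /andP[nzX /eqP sumX0] | noX] :=
  pickP [pred X : {set I} | (X != set0) && (\sum_(i in X) g i == 0)].
  by exists X.
pose P := \prod_i (1 - gdelta F (g i)).
have P0 : P = 0.
  have /fin_all_exists [d gd] : forall i, exists d : J -> galg F V,
      1 - gdelta F (g i) = \sum_j (1 - gdelta F (e j)) * d j.
    by move=> i; have [c ->] := comb_g i; apply: in_delta_ideal_comb.
  rewrite /P (eq_bigr _ (fun i _ => gd i)).
  apply: (prod_comb_nilpotent_eq0 (n := fun j => p ^ t j)%N) => // j.
  by rewrite gdelta_frobenius // ord_e gdelta0 subrr.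
have P1 : P 0 = 1.
  rewrite /P (eq_bigr (fun i => - gdelta F (g i) + 1)) => [|i _]; last first.
    by rewrite addrC.
  rewrite bigA_distr sum_ffunE (bigD1 set0) //= big1 => [|i _]; last first.
    by rewrite in_set0.
  rewrite ffunE eqxx big1 ?addr0 // => X nzX.
  rewrite -big_mkcond prodrN -(big_morph _ (@gdeltaD F V) (gdelta0 F V)).
  have := noX X; rewrite /= nzX /= => sumXn0.
  rewrite -signr_odd; case: (odd _); rewrite ?expr0 ?mul1r ?expr1 ?mulN1r ?ffunE;
    by rewrite eq_sym sumXn0 ?oppr0.
by have := oner_neq0 F; rewrite -P1 P0 ffunE eqxx.
Qed.

Definition set_mask (T : Type) (s : seq T) (X : {set 'I_(size s)}) : bitseq :=
  [seq i \in X | i <- enum 'I_(size s)].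

Lemma big_set_mask (R : Type) (idx : R) (op : Monoid.law idx) (T : Type)
    (x0 : T) (s : seq T) (X : {set 'I_(size s)}) (F : T -> R) :
  \big[op/idx]_(x <- mask (set_mask X) s) F x = \big[op/idx]_(i in X) F (nth x0 s i).
Proof.
rewrite big_mask; apply: eq_big => [i | i _]; last by rewrite (tnth_nth x0).
by rewrite andbT (nth_map i) ?size_enum_ord // nth_ord_enum.
Qed.

Lemma size_set_mask (T : Type) (s : seq T) (X : {set 'I_(size s)}) :
  size (mask (set_mask X) s) = #|X|.
Proof.
rewrite size_mask; last by rewrite size_map size_enum_ord.
by rewrite count_map cardE -size_filter enumT.
Qed.

Local Open Scope group_scope.

Lemma abelem_isog_rV p (gT : finGroupType) (A : {group gT}) :
  prime p -> p.-abelem A -> A \isog [set: 'rV['F_p]_(logn p #|A|)].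
Proof.
move=> pp abelA; rewrite (isog_abelem_card _ abelA) mx_Fp_abelem //= cardsT.
by rewrite card_mx card_Fp // mul1n -card_pgroup ?(abelem_pgroup abelA).
Qed.

(* Makes products of finZmodTypes finZmodTypes. *)
HB.saturate prod.

Lemma pairMn (U U' : nmodType) (x : U) (y : U') n : (x, y) *+ n = (x *+ n, y *+ n).
Proof. by elim: n => [|n IH]; rewrite ?mulr0n // !mulrS IH. Qed.

Lemma abelem_mask_prod_eq1 p e (gT : finGroupType) (A : {group gT}) (s : seq gT) :
  prime p -> p.-abelem A -> (0 < e)%N -> {subset s <= A} ->
  (p ^ e + logn p #|A| * (p - 1) <= size s < 2 * p ^ e)%N ->
  exists m : bitseq, size (mask m s) = (p ^ e)%N /\ \prod_(x <- mask m s) x = 1.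
Proof.
move=> pp abelA e_gt0 sA /andP[lo hi]; set n := logn p #|A| in lo.
have [f injf _] := isogP (abelem_isog_rV pp abelA).
have pe_gt1 : (1 < p ^ e)%N by rewrite -[1%N](expn0 p) ltn_exp2l ?prime_gt1.
pose g (i : 'I_(size s)) : 'rV['F_p]_n * 'Z_(p ^ e) := (f (nth 1 s i), 1%R).
pose b (j : 'I_n.+1) : 'rV['F_p]_n * 'Z_(p ^ e) :=
  if unlift ord0 j is Some k then (delta_mx 0 k, 0%R) else (0%R, 1%R).
pose t (j : 'I_n.+1) := if unlift ord0 j is Some _ then 1%N else e.
have [|||X nzX sumX0] := @olson 'F_p _ p _ _ b t g (pchar_Fp pp).
- move=> j; rewrite /b /t; case: (unlift _ _) => [k|]; rewrite pairMn ?mul0rn.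
    by rewrite expn1 -scaler_nat pchar_Fp_0 // scale0r.
  by rewrite pchar_Zp.
- move=> i.
  exists (fun j => if unlift ord0 j is Some k then val (f (nth 1 s i) 0 k) else 1%N).
  rewrite [RHS]surjective_pairing !raddf_sum !big_ord_recl /= /b unlift_none.
  under eq_bigr do rewrite liftK pairMn.
  rewrite mulr1n /=; congr pair.
    rewrite add0r [LHS]row_sum_delta; apply: eq_bigr => k _.
    by rewrite -scaler_nat natr_Zp.
  by rewrite big1 ?addr0 // => k _; rewrite liftK pairMn mul0rn.
- rewrite card_ord big_ord_recl /t unlift_none.
  under eq_bigr do rewrite liftK expn1.
  rewrite sum_nat_const card_ord; lia.
have nth_sA (i : 'I_(size s)) : nth 1 s i \in A by rewrite sA ?mem_nth.
exists (set_mask X); rewrite size_set_mask (big_set_mask _ 1); split.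
  have /(congr1 val) := congr1 snd sumX0; rewrite raddf_sum sumr_const /=.
  rewrite val_Zp_nat // => /eqP; rewrite -/(dvdn _ _) => /dvdnP[k cardX].
  have : (0 < #|X| <= size s)%N.
    by rewrite card_gt0 nzX (leq_trans (max_card _)) ?card_ord.
  by rewrite cardX; case: k {cardX} hi => [|[|k]] //=; nia.
apply: (injmP injf); rewrite ?group1 ?group_prod ?morph1 ?morph_prod //.
by have := congr1 fst sumX0; rewrite raddf_sum.
Qed.

Lemma msub_subseq (T : eqType) (S W : seq T) : subseq S W -> msub S W.
Proof. by exists S. Qed.

Lemma abelem_product_one_msub p e (gT : finGroupType) (A : {group gT}) (W : seq gT) :
  prime p -> p.-abelem A -> (0 < e)%N ->
  (p ^ e + logn p #|A| * (p - 1) <= count (fun x => x \in A) W)%N ->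
  (size W < 2 * p ^ e)%N ->
  exists S, msub S W /\ size S = (p ^ e)%N /\ product_one S.
Proof.
move=> pp abelA e_gt0 lo hi; set WA := filter (fun x => x \in A) W.
have [||m [sz_m prod_m]] := @abelem_mask_prod_eq1 p e _ A WA pp abelA e_gt0.
- by move=> x; rewrite mem_filter => /andP[].
- by rewrite size_filter lo /= (leq_ltn_trans (count_size _ _)).
exists (mask m WA); split.
  exact/msub_subseq/(subseq_trans (mask_subseq _ _))/filter_subseq.
split=> //; split; last by exists (mask m WA).
by move/(congr1 size)/eqP; rewrite sz_m expn_eq0 eqn0Ngt prime_gt0.
Qed.

Lemma abelem_quotient_msub p e (gT : finGroupType) (G H : {group gT}) (W : seq gT) :
  prime p -> p.-abelem (G / H) -> (0 < e)%N -> G \subset 'N(H) -> {subset W <= G} ->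
  (p ^ e + logn p #|G / H| * (p - 1) <= size W < 2 * p ^ e)%N ->
  exists S, msub S W /\ size S = (p ^ e)%N /\ Defs.seqprod S \in H.
Proof.
move=> pp abelQ e_gt0 nHG sWG bounds.
have [||m [sz_m prod_m]] :=
  @abelem_mask_prod_eq1 p e _ _ (map (coset H) W) pp abelQ e_gt0.
- by move=> _ /mapP[x Wx ->]; rewrite mem_quotient ?sWG.
- by rewrite size_map.
have NmW x : x \in mask m W -> x \in 'N(H) by move/mem_mask/sWG/(subsetP nHG).
exists (mask m W); split; first exact/msub_subseq/mask_subseq.
rewrite -map_mask size_map in sz_m; split=> //.
rewrite /Defs.seqprod big_seq; apply: coset_idr; first by apply: group_prod => x /NmW.
by rewrite morph_prod // -big_seq -(big_map _ xpredT id) map_mask.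
Qed.

Lemma p2group_abelem p (gT : finGroupType) (K : {group gT}) :
  prime p -> #|K| = (p ^ 2)%N -> (exponent K %| p)%N -> p.-abelem K.
Proof. by move=> pp oK eK; rewrite abelemE // (card_p2group_abelian pp oK). Qed.

Theorem lemma2p9 (p : nat) (gT : finGroupType) (G : {group gT}) :
  prime p -> odd p ->
  #|G| = (p ^ 3)%N -> ~~ abelian G -> exponent G = p ->
  forall W : seq gT, all (fun x => x \in G) W ->
  size W = (p ^ 3 + 3 * p - 3)%N ->
  [/\ (exists S, msub S W /\ size S = (p ^ 3)%N /\ has_central_product G S),
      ((p ^ 3 + p - 1 <= count (fun x => x \in 'Z(G)) W)%N ->
         exists S, msub S W /\ size S = (p ^ 3)%N /\ product_one S)
    & (forall M : {group gT}, maximal M G ->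
         (p ^ 3 + 2 * p - 2 <= count (fun x => x \in M) W)%N ->
         exists S, msub S W /\ size S = (p ^ 3)%N /\ product_one S)].
Proof.
move=> pp _ oG nabG eG W /allP sWG sizeW.
have p_gt1 := prime_gt1 pp.
have pG : p.-group G by rewrite /pgroup oG pnatX pnat_id.
have oZ : #|'Z(G)| = p.
  apply: card_center_extraspecial pG (p3group_extraspecial pG nabG _).
  by rewrite oG pfactorK.
have short : (size W < 2 * p ^ 3)%N by rewrite sizeW; nia.
have logp2 : logn p (p ^ 2) = 2 by rewrite pfactorK.
split.
- have nZG : G \subset 'N('Z(G)) := normal_norm (center_normal G).
  have oGZ : #|G / 'Z(G)| = (p ^ 2)%N.
    by rewrite card_quotient // -divgS ?center_sub // oG oZ expnSr mulnK ?prime_gt0.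
  have abelGZ : p.-abelem (G / 'Z(G)).
    by rewrite p2group_abelem // -eG exponent_quotient.
  apply: abelem_quotient_msub abelGZ _ nZG sWG _ => //.
  by rewrite short andbT oGZ logp2 sizeW; lia.
- move=> countZ; apply: abelem_product_one_msub (prime_abelem pp oZ) _ _ short => //.
  by rewrite oZ logn_prime // eqxx mul1n (leq_trans _ countZ) //; lia.
move=> M maxM countM; have sMG := proper_sub (maxgroupp maxM).
have oM : #|M| = (p ^ 2)%N.
  apply/eqP; rewrite -(eqn_pmul2r (prime_gt0 pp)) -{1}(p_maximal_index pG maxM).
  by rewrite Lagrange // oG -expnSr.
have abelM : p.-abelem M by rewrite p2group_abelem // -eG exponentS.
apply: abelem_product_one_msub abelM _ _ short => //.
by rewrite oM logp2; lia.
Qed.
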